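(* Consider Method 1.4 (described in the context) and suppose it does not terminate and the generated sequence $\{x_k\}_{k\in K}$ is bounded. Then every limit point of $\{x_k\}_{k\in K}$ belongs to $X^*$.
   Context: Setting: $f_j$, $j\in J=\{1,\dots,m\}$, convex on $\mathbb{R}^n$ with $D_j=\{x:f_j(x)\le0\}$ having nonempty interior; $D=\{x:f_j(x)\le0\ \forall j\}$; $f$ continuous, attaining its minimum on $D$. Notation: $K=\{0,1,\dots\}$, $f^*=\min_Df$, $X^*=\{x\in D: f(x)=f^*\}$, $W^1(x,D_j)=\{a:\|a\|=1,\ \langle a,z-x\rangle\le0\ \forall z\in D_j\}$. Method 1.4: choose a closed convex $M_0\subset\mathbb{R}^n$ containing at least one point of $X^*$, points $y^j\in\operatorname{int}D_j$, a constant $q\ge1$, and a point $x_0\in M_0$ with $f(x_0)\le f^*$. Given $x_k$: Step 1: if $x_k\in D$, stop. Step 2: $J_k=\{j:x_k\notin D_j\}$. Step 3: for $j\in J_k$ choose $z_k^j$ in the open segment $(y^j,x_k)$ with $z_k^j\notin\operatorname{int}D_j$ and $x_k+q_k^j(z_k^j-x_k)\in D_j$ for some $q_k^j\in[1,q]$. Step 4: for $j\in J_k$ choose a nonempty finite $A_k^j\subset W^1(z_k^j,D_j)$, set $M_k^j=M_k\cap\{x:\langle a,x-z_k^j\rangle\le0\ \forall a\in A_k^j\}$ and choose $u_k^j\in M_k^j$ with $f(u_k^j)\le f^*$. Step 5: find $j_k\in J_k$ with $\|x_k-z_k^{j_k}\|=\max_{j\in J_k}\|x_k-z_k^j\|$.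 Step 6: $J_k'=\{j\in J_k: u_k^j\in M_k^{j_k}\}$; find $l_k\in J_k'$ with $f(u_k^{l_k})=\max_{j\in J_k'}f(u_k^j)$. Step 7: $M_{k+1}=M_k^{j_k}\cap\{x:\langle a,x-z_k^{l_k}\rangle\le0\ \forall a\in A_k^{l_k}\}$, $x_{k+1}=u_k^{l_k}$. *)

From mathcomp Require Import all_boot all_order all_algebra.
From mathcomp Require Import reals.
Set Implicit Arguments. Unset Strict Implicit. Unset Printing Implicit Defensive.
Import Order.TTheory GRing.Theory Num.Theory.
Local Open Scope ring_scope.

Section Defs.
Variables (R : realType) (n : nat).
Local Notation vec := 'rV[R]_n.

Definition dotv (a b : vec) : R := \sum_(i < n) a ord0 i * b ord0 i.
Definition enorm (a : vec) : R := Num.sqrt (dotv a a).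

Definition convex_fun (g : vec -> R) : Prop :=
  forall x y t, 0 <= t <= 1 -> g (t *: x + (1 - t) *: y) <= t * g x + (1 - t) * g y.
Definition convex_set (S : vec -> Prop) : Prop :=
  forall x y t, S x -> S y -> 0 <= t <= 1 -> S (t *: x + (1 - t) *: y).
Definition closed_set (S : vec -> Prop) : Prop :=
  forall p, (forall e, 0 < e -> exists w, S w /\ enorm (w - p) < e) -> S p.
Definition interior_pt (S : vec -> Prop) (y : vec) : Prop :=
  exists e, 0 < e /\ forall w, enorm (w - y) < e -> S w.
Definition continuous_fun (g : vec -> R) : Prop :=
  forall x e, 0 < e -> exists d, 0 < d /\ forall w, enorm (w - x) < d -> `|g w - g x| < e.

Definition sublevel (g : vec -> R) : vec -> Prop := fun x => g x <= 0.
Definition feasible m (fs : 'I_m -> vec -> R) : vec -> Prop :=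
  fun x => forall j, fs j x <= 0.
Definition W1 (x : vec) (S : vec -> Prop) (a : vec) : Prop :=
  enorm a = 1 /\ forall w, S w -> dotv a (w - x) <= 0.
Definition halfspaces (z : vec) (As : seq vec) : vec -> Prop :=
  fun x => forall a, a \in As -> dotv a (x - z) <= 0.

Definition is_min_value (f : vec -> R) (D : vec -> Prop) (fstar : R) : Prop :=
  (exists x, D x /\ f x = fstar) /\ forall y, D y -> fstar <= f y.
Definition Xstar (f : vec -> R) (D : vec -> Prop) (fstar : R) : vec -> Prop :=
  fun x => D x /\ f x = fstar.

Definition cluster_point (x : nat -> vec) (p : vec) : Prop :=
  forall e, 0 < e -> forall N, exists k, (N <= k)%N /\ enorm (x k - p) < e.

(* A run of Method 1.4: all the choices made by the method.
   M k = M_k, y j = y^j, x k = x_k, z k j = z_k^j, A k j = A_k^j, u k j = u_k^j,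
   jk k = j_k, lk k = l_k.  Constraints on z k j, A k j, u k j only for j in J_k. *)
Definition method14_run m (fs : 'I_m -> vec -> R) (f : vec -> R) (fstar : R)
  (M : nat -> vec -> Prop) (y : 'I_m -> vec) (q : R) (x : nat -> vec)
  (z u : nat -> 'I_m -> vec) (A : nat -> 'I_m -> seq vec) (jk lk : nat -> 'I_m) : Prop :=
  let D := feasible fs in
  let Jk k j := ~ sublevel (fs j) (x k) in
  let Mkj k j w := M k w /\ halfspaces (z k j) (A k j) w in
  closed_set (M 0) /\ convex_set (M 0) /\ (exists xs, M 0 xs /\ Xstar f D fstar xs) /\
  (forall j, interior_pt (sublevel (fs j)) (y j)) /\ 1 <= q /\
  M 0 (x 0) /\ f (x 0) <= fstar /\
  (* iteration k (Step 1's stop test is handled by the non-termination hypothesis) *)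
  forall k,
    (* Steps 3 and 4 *)
    (forall j, Jk k j ->
       (exists t, 0 < t < 1 /\ z k j = (1 - t) *: y j + t *: x k) /\
       ~ interior_pt (sublevel (fs j)) (z k j) /\
       (exists qq, 1 <= qq <= q /\ sublevel (fs j) (x k + qq *: (z k j - x k))) /\
       A k j != [::] /\
       (forall a, a \in A k j -> W1 (z k j) (sublevel (fs j)) a) /\
       Mkj k j (u k j) /\ f (u k j) <= fstar) /\
    (* Step 5 *)
    (Jk k (jk k) /\ forall j, Jk k j -> enorm (x k - z k j) <= enorm (x k - z k (jk k))) /\
    (* Step 6 *)
    (Jk k (lk k) /\ Mkj k (jk k) (u k (lk k)) /\
       forall j, Jk k j -> Mkj k (jk k) (u k j) -> f (u k j) <= f (u k (lk k))) /\
    (* Step 7 *)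
    (forall w, M k.+1 w <-> (Mkj k (jk k) w /\ halfspaces (z k (lk k)) (A k (lk k)) w)) /\
    x k.+1 = u k (lk k).

End Defs.

From mathcomp Require Import all_boot all_order all_algebra.
From mathcomp Require Import reals ring lra.
Import Order.TTheory GRing.Theory Num.Theory.
Local Open Scope ring_scope.
Set Implicit Arguments.
Unset Strict Implicit.

(* If l > k, the iterate x_l lies in the half-space cut off at z_k^{j_k} by a
   unit normal a, whereas a ball B(y^{j_k}, r) of D_{j_k} lies on the other side
   of that hyperplane.  Since z_k^{j_k} lies on the segment [y^{j_k}, x_k], this
   gives r |x_k - z_k^{j_k}| <= 2 C |x_k - x_l| for a bound C of |x_k - y^j|.
   Near a limit point p the differences x_k - x_l, hence by Step 5 all the
   x_k - z_k^j, become small, so the points x_k + q_k^j (z_k^j - x_k) of D_j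
   accumulate at p.  A sublevel set of a convex function with an interior point
   is closed, so p lies in D; and f(x_k) <= f^* passes to the limit. *)

Section Euclidean.
Context {R : realType} {n : nat}.
Implicit Types (a b c : 'rV[R]_n) (s : R).

Lemma dotvC a b : dotv a b = dotv b a.
Proof. by apply: eq_bigr => i _; rewrite mulrC. Qed.

Lemma dotvDr a b c : dotv a (b + c) = dotv a b + dotv a c.
Proof. by rewrite /dotv -big_split; apply: eq_bigr => i _; rewrite mxE mulrDr. Qed.

Lemma dotvZr a b s : dotv a (s *: b) = s * dotv a b.
Proof. by rewrite /dotv mulr_sumr; apply: eq_bigr => i _; rewrite mxE mulrCA. Qed.

Lemma dotvNr a b : dotv a (- b) = - dotv a b.
Proof. by rewrite -scaleN1r dotvZr mulN1r. Qed.

Lemma dotvBr a b c : dotv a (b - c) = dotv a b - dotv a c.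
Proof. by rewrite dotvDr dotvNr. Qed.

Lemma dotvDl a b c : dotv (a + b) c = dotv a c + dotv b c.
Proof. by rewrite dotvC dotvDr !(dotvC c). Qed.

Lemma dotvZl a b s : dotv (s *: a) b = s * dotv a b.
Proof. by rewrite dotvC dotvZr dotvC. Qed.

Lemma dotvBl a b c : dotv (a - b) c = dotv a c - dotv b c.
Proof. by rewrite dotvC dotvBr !(dotvC c). Qed.

Lemma dotvv_ge0 a : 0 <= dotv a a.
Proof. by apply: sumr_ge0 => i _; rewrite -expr2 sqr_ge0. Qed.

Lemma dotvv_eq0 a : dotv a a = 0 -> a = 0.
Proof.
move=> /eqP; rewrite psumr_eq0 => [/allP a0|i _]; last by rewrite -expr2 sqr_ge0.
apply/rowP => i; rewrite mxE; apply/eqP.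
by have /implyP := a0 i (mem_index_enum i); rewrite mulf_eq0 orbb; apply.
Qed.

Lemma dotv0l b : dotv 0 b = 0.
Proof. by rewrite -(scale0r 0) dotvZl mul0r. Qed.

Lemma enorm_ge0 a : 0 <= enorm a.
Proof. exact: sqrtr_ge0. Qed.

Lemma enorm_sqr a : enorm a ^+ 2 = dotv a a.
Proof. by rewrite sqr_sqrtr // dotvv_ge0. Qed.

Lemma enorm_gt0 a : a != 0 -> 0 < enorm a.
Proof.
rewrite lt_def enorm_ge0 andbT; apply: contra => /eqP a0.
by apply/eqP/dotvv_eq0; rewrite -enorm_sqr a0 expr2 mul0r.
Qed.

Lemma enormZ s a : enorm (s *: a) = `|s| * enorm a.
Proof.
by rewrite /enorm dotvZl dotvZr mulrA -expr2 sqrtrM ?sqr_ge0 // sqrtr_sqr.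
Qed.

Lemma enorm0 : enorm (0 : 'rV[R]_n) = 0.
Proof. by rewrite /enorm dotv0l sqrtr0. Qed.

Lemma enormN a : enorm (- a) = enorm a.
Proof. by rewrite -scaleN1r enormZ normrN normr1 mul1r. Qed.

Lemma enorm_distC a b : enorm (a - b) = enorm (b - a).
Proof. by rewrite -opprB enormN. Qed.

Lemma dotv_le_enormM a b : dotv a b <= enorm a * enorm b.
Proof.
have [-> | a_neq0] := eqVneq a 0; first by rewrite dotv0l mulr_ge0 ?enorm_ge0.
have [-> | b_neq0] := eqVneq b 0; first by rewrite dotvC dotv0l mulr_ge0 ?enorm_ge0.
have AB_gt0 := mulr_gt0 (enorm_gt0 a_neq0) (enorm_gt0 b_neq0).
have := dotvv_ge0 (enorm b *: a - enorm a *: b).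
rewrite !(dotvBl, dotvBr, dotvZl, dotvZr) -!enorm_sqr (dotvC b a); nra.
Qed.

Lemma ler_enormD a b : enorm (a + b) <= enorm a + enorm b.
Proof.
rewrite -(ler_pXn2r (_ : 0 < 2)%N) ?nnegrE ?addr_ge0 ?enorm_ge0 //.
rewrite enorm_sqr sqrrD !enorm_sqr !(dotvDl, dotvDr) (dotvC b a).
by have := dotv_le_enormM a b; lra.
Qed.

Lemma ler_enorm_distD a b c : enorm (a - c) <= enorm (a - b) + enorm (b - c).
Proof. by have := ler_enormD (a - b) (b - c); rewrite addrA subrK. Qed.

End Euclidean.

Section ConvexSublevel.
Context {R : realType} {n : nat}.
Local Notation vec := 'rV[R]_n.

Definition adherent (S : vec -> Prop) (p : vec) : Prop :=
  forall e, 0 < e -> exists w, S w /\ enorm (w - p) < e.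

Lemma convex_set_sublevel (g : vec -> R) : convex_fun g -> convex_set (sublevel g).
Proof.
rewrite /sublevel => cg a b t ga gb /andP[t0 t1].
by apply: le_trans (cg _ _ _ _) _; [rewrite t0 | nra].
Qed.

Lemma convex_set_segment (S : vec -> Prop) (y p : vec) (r l : R) :
  convex_set S -> 0 < r -> (forall w, enorm (w - y) < r -> S w) ->
  adherent S p -> 0 < l < 1 -> S (l *: y + (1 - l) *: p).
Proof.
move=> cS r0 yS pS /andP[l0 l1].
have [w [Sw wp]] := pS (l * r) (mulr_gt0 l0 r0).
pose y' := y + ((1 - l) / l) *: (p - w).
have -> : l *: y + (1 - l) *: p = l *: y' + (1 - l) *: w.
  by apply/rowP => i; rewrite !mxE; field; rewrite gt_eqF.
apply: cS (Sw) _; last by rewrite !ltW.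
apply: yS; rewrite /y' addrC addKr enormZ enorm_distC ger0_norm; last first.
  by rewrite divr_ge0 ?subr_ge0 ?ltW.
rewrite mulrAC ltr_pdivrMr //; have := enorm_ge0 (w - p); nra.
Qed.

Lemma convex_sublevel_closed (g : vec -> R) (y : vec) :
  convex_fun g -> interior_pt (sublevel g) y -> closed_set (sublevel g).
Proof.
move=> cg [r [r0 yS]] p pS; rewrite /sublevel.
(* p is the convex combination of l y + (1 - l) p and p2 with weight l / (1 + l)
   on p2, so g p is at most l |g p2| for every l in (0, 1). *)
pose p2 := 2%:R *: p - y.
suff gp_le l : 0 < l < 1 -> g p <= l * `|g p2|.
  apply/ler_addgt0Pr => e e0; rewrite add0r.
  have D0 : 0 < e + `|g p2| + 1 by have := normr_ge0 (g p2); lra.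
  apply: le_trans (gp_le (e / (e + `|g p2| + 1)) _) _.
    by rewrite divr_gt0 //= ltr_pdivrMr // mul1r; have := normr_ge0 (g p2); lra.
  by rewrite mulrAC ler_pdivrMr //; have := normr_ge0 (g p2); nra.
move=> l01; have /andP[l0 l1] := l01.
have gw := convex_set_segment (convex_set_sublevel cg) r0 yS pS l01.
pose t := (1 + l)^-1.
have t0 : 0 < t by rewrite invr_gt0 addr_gt0.
have t1 : 1 - t = l * t by rewrite /t; field; rewrite gt_eqF // addr_gt0.
have -> : p = t *: (l *: y + (1 - l) *: p) + (1 - t) *: p2.
  by apply/rowP => i; rewrite !mxE /t; field; rewrite gt_eqF // addr_gt0.
have t_le1 : t <= 1 by rewrite -subr_ge0 t1 mulr_ge0 ?ltW.
apply: le_trans (cg _ _ _ _) _; first by rewrite (ltW t0) t_le1.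
have tgw : t * g (l *: y + (1 - l) *: p) <= 0 by rewrite pmulr_rle0.
suff : t * g p2 <= `|g p2| by rewrite t1 -mulrA; nra.
have := ler_norm (g p2); have := normr_ge0 (g p2); nra.
Qed.

End ConvexSublevel.

Section Separation.
Context {R : realType} {n : nat}.
Local Notation vec := 'rV[R]_n.
Variables (S : vec -> Prop) (y : vec) (r : R).
Hypotheses (r_gt0 : 0 < r) (ball_y : forall w, enorm (w - y) < r -> S w).

Lemma W1_ball_gap (z a : vec) : W1 z S a -> r / 2 <= dotv a (z - y).
Proof.
move=> [a1 aS].
have Sya : S (y + (r / 2) *: a).
  apply: ball_y; rewrite addrC addKr enormZ a1 mulr1 ger0_norm ?divr_ge0 ?ltW //.
  by rewrite ltr_pdivrMr // ltr_pMr // ltr1n.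
have := aS _ Sya; rewrite -[y + _ - z]addrAC -opprB.
rewrite (dotvDr a (- _)) dotvNr dotvZr -enorm_sqr a1 expr1n mulr1; lra.
Qed.

Lemma W1_separation (x z w a : vec) (t : R) :
  0 < t < 1 -> z = (1 - t) *: y + t *: x -> W1 z S a -> dotv a (w - z) <= 0 ->
  r * enorm (x - z) <= 2 * enorm (x - y) * enorm (x - w).
Proof.
move=> /andP[t0 t1] z_def aW aw.
have gap := W1_ball_gap aW.
have xz : x - z = (1 - t) *: (x - y).
  by apply/rowP => i; rewrite z_def !mxE; ring.
have txz : t *: (x - z) = (1 - t) *: (z - y).
  by apply/rowP => i; rewrite z_def !mxE; ring.
have axw : dotv a (x - w) <= enorm (x - w).
  by have := dotv_le_enormM a (x - w); rewrite aW.1 mul1r.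
have x_w : dotv a (x - w) = dotv a (x - z) - dotv a (w - z).
  by rewrite -dotvBr opprB addrA subrK.
have t_axz : t * dotv a (x - z) = (1 - t) * dotv a (z - y).
  by rewrite -!dotvZr txz.
have gap_xz : (1 - t) * (r / 2) <= t * dotv a (x - z).
  by rewrite t_axz; apply: ler_wpM2l => //; rewrite subr_ge0 ltW.
have axz_ge0 : 0 <= dotv a (x - z).
  rewrite -(pmulr_rge0 _ t0); apply: le_trans gap_xz.
  by rewrite mulr_ge0 ?subr_ge0 ?divr_ge0 ?ltW.
have dist_xw : (1 - t) * r <= 2 * enorm (x - w) by nra.
rewrite xz enormZ ger0_norm; last by rewrite subr_ge0 ltW.
by have := ler_wpM2l (enorm_ge0 (x - y)) dist_xw; nra.
Qed.

End Separation.

Section Finite.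
Context {R : realType} {n : nat} {I : finType}.
Local Notation vec := 'rV[R]_n.

Lemma interior_pt_uniform (S : I -> vec -> Prop) (y : I -> vec) :
  (forall j, interior_pt (S j) (y j)) ->
  exists r, 0 < r /\ forall j w, enorm (w - y j) < r -> S j w.
Proof.
move=> yS; suff [r [r0 rS]] : exists r, 0 < r /\
    forall j, j \in enum I -> forall w, enorm (w - y j) < r -> S j w.
  by exists r; split=> // j; apply: rS; rewrite mem_enum.
elim: (enum I) => [|j s [r [r0 rS]]]; first by exists 1.
have [rj [rj0 rjS]] := yS j.
exists (Num.min r rj); split; first by rewrite lt_min r0 rj0.
move=> i /predU1P[-> | i_s] w; rewrite lt_min => /andP[wr wrj]; first exact: rjS.
exact: rS.
Qed.

Lemma enorm_sub_ub (x : nat -> vec) (y : I -> vec) (B : R) :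
  (forall k, enorm (x k) <= B) ->
  exists C, 0 <= C /\ forall k j, enorm (x k - y j) <= C.
Proof.
move=> xB; have y_le j : enorm (y j) <= \sum_i enorm (y i).
  by rewrite (bigD1 j) //= lerDl sumr_ge0 // => i _; apply: enorm_ge0.
exists (B + \sum_i enorm (y i)); split.
  rewrite addr_ge0 ?(le_trans (enorm_ge0 _) (xB 0%N)) //.
  by rewrite sumr_ge0 // => i _; apply: enorm_ge0.
move=> k j; apply: le_trans (ler_enormD _ _) _.
by rewrite enormN lerD.
Qed.

End Finite.

Section ClusterPoint.
Context {R : realType} {n : nat}.
Local Notation vec := 'rV[R]_n.
Variables (x : nat -> vec) (p : vec).
Hypothesis x_p : cluster_point x p.

Lemma cluster_point_adherent (S : vec -> Prop) (K : R) :
  (forall k l, (k < l)%N ->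
     exists w, S w /\ enorm (w - x k) <= K * enorm (x k - x l)) ->
  adherent S p.
Proof.
move=> xS e e0; have K_ge0 := normr_ge0 K.
have D_gt0 : 0 < 2 * `|K| + 1 by lra.
have [d d0 d_def] : exists2 d, 0 < d & d * (2 * `|K| + 1) = e.
  by exists (e / (2 * `|K| + 1)); rewrite ?divr_gt0 ?mulfVK ?gt_eqF.
have [k [_ xk]] := x_p d0 0%N.
have [l [kl xl]] := x_p d0 k.+1.
have [w [Sw wx]] := xS k l kl.
exists w; split => //.
have xkl := ler_enorm_distD (x k) p (x l); rewrite (enorm_distC p) in xkl.
have {}wx : enorm (w - x k) <= `|K| * enorm (x k - x l).
  exact: le_trans wx (ler_wpM2r (enorm_ge0 _) (ler_norm K)).
have := ler_enorm_distD w (x k) p; nra.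
Qed.

Lemma cluster_point_cont_le (f : vec -> R) (c : R) :
  continuous_fun f -> (forall k, f (x k) <= c) -> f p <= c.
Proof.
move=> f_cont xc; apply/ler_addgt0Pr => e e0.
have [d [d0 fd]] := f_cont p e e0.
have [k [_ xk]] := x_p d0 0%N.
have /ltr_normlP[fxk _] := fd _ xk.
by have := xc k; lra.
Qed.

End ClusterPoint.

Section Method14.
Context {R : realType} {m n : nat}.
Variables (fs : 'I_m -> 'rV[R]_n -> R) (f : 'rV[R]_n -> R) (fstar : R)
  (M : nat -> 'rV[R]_n -> Prop) (y : 'I_m -> 'rV[R]_n) (q : R)
  (x : nat -> 'rV[R]_n) (z u : nat -> 'I_m -> 'rV[R]_n)
  (A : nat -> 'I_m -> seq 'rV[R]_n) (jk lk : nat -> 'I_m).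
Hypothesis run : method14_run fs f fstar M y q x z u A jk lk.

Let iteration :=
  let: conj _ (conj _ (conj _ (conj _ (conj _ (conj _ (conj _ it)))))) := run in it.

Lemma f_x_le_fstar k : f (x k) <= fstar.
Proof.
case: k => [|k]; first by case: run => _ [_ [_ [_ [_ [_ []]]]]].
have [steps34 [_ [[lk_J _] [_ ->]]]] := iteration k.
by have [_ [_ [_ [_ [_ []]]]]] := steps34 _ lk_J.
Qed.

Lemma M_x k : M k (x k).
Proof.
case: k => [|k]; first by case: run => _ [_ [_ [_ [_ []]]]].
have [steps34 [_ [[lk_J [M_u _]] [M_next ->]]]] := iteration k.
apply/M_next; split=> //.
by have [_ [_ [_ [_ [_ [[] _]]]]]] := steps34 _ lk_J.
Qed.

Lemma M_antitone k l w : (k <= l)%N -> M l w -> M k w.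
Proof.
elim: l => [|l IH]; first by rewrite leqn0 => /eqP ->.
rewrite leq_eqVlt ltnS => /predU1P[-> // | kl] Mw; apply: IH kl _.
by have [_ [_ [_ [/(_ w) [/(_ Mw) [[]]]]]]] := iteration l.
Qed.

Lemma halfspaces_jk_x k l :
  (k < l)%N -> halfspaces (z k (jk k)) (A k (jk k)) (x l).
Proof.
move=> kl; have Mx := M_antitone kl (M_x l).
by have [_ [_ [_ [/(_ (x l)) [/(_ Mx) [[]]]]]]] := iteration k.
Qed.

Variables (r C : R).
Hypotheses (r_gt0 : 0 < r) (C_ge0 : 0 <= C)
  (ball_y : forall j w, enorm (w - y j) < r -> fs j w <= 0)
  (x_y_le : forall k j, enorm (x k - y j) <= C).

Lemma dist_z_jk_le k l :
  (k < l)%N -> r * enorm (x k - z k (jk k)) <= 2 * C * enorm (x k - x l).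
Proof.
move=> kl; have [steps34 [[jk_J _] _]] := iteration k.
have [[t [t01 z_def]] [_ [_ [A_nil [A_W1 _]]]]] := steps34 _ jk_J.
have [a a_in] : exists a, a \in A k (jk k).
  by case: (A k (jk k)) A_nil => // a s _; exists a; rewrite mem_head.
apply: le_trans (W1_separation r_gt0 (@ball_y (jk k)) t01 z_def (A_W1 a a_in)
  (halfspaces_jk_x kl a_in)) _.
by rewrite ler_wpM2r ?enorm_ge0 // ler_wpM2l.
Qed.

Lemma sublevel_near_x j k l : (k < l)%N ->
  exists w, fs j w <= 0 /\ enorm (w - x k) <= 2 * q * C / r * enorm (x k - x l).
Proof.
move=> kl; have [_ [_ [_ [_ [q_ge1 _]]]]] := run.
have [xj | xj] := lerP (fs j (x k)) 0.
  exists (x k); rewrite subrr enorm0; split=> //.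
  by rewrite mulr_ge0 ?enorm_ge0 // divr_ge0 ?mulr_ge0 ?(ltW r_gt0) //; lra.
have j_J : ~ sublevel (fs j) (x k) by move/(lt_le_trans xj); rewrite ltxx.
have [steps34 [[_ jk_max] _]] := iteration k.
have [_ [_ [[qq [/andP[qq_ge1 qq_le] w_in]] _]]] := steps34 _ j_J.
exists (x k + qq *: (z k j - x k)); split=> //.
rewrite [x k + _]addrC addrK enormZ ger0_norm; last by lra.
rewrite enorm_distC mulrAC ler_pdivlMr //.
have dist_z := ler_pM (le_trans ler01 qq_ge1) (enorm_ge0 _) qq_le (jk_max _ j_J).
have := dist_z_jk_le kl; have := enorm_ge0 (x k - z k (jk k)); have := r_gt0; nra.
Qed.

End Method14.

Unset Implicit Arguments.

Theorem theorem1p4p1 (R : realType) (m n : nat)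
  (fs : 'I_m -> 'rV[R]_n -> R) (f : 'rV[R]_n -> R) (fstar : R)
  (M : nat -> 'rV[R]_n -> Prop) (y : 'I_m -> 'rV[R]_n) (q : R)
  (x : nat -> 'rV[R]_n) (z u : nat -> 'I_m -> 'rV[R]_n)
  (A : nat -> 'I_m -> seq 'rV[R]_n) (jk lk : nat -> 'I_m) :
  (forall j, convex_fun (fs j)) ->
  continuous_fun f ->
  is_min_value f (feasible fs) fstar ->
  method14_run fs f fstar M y q x z u A jk lk ->
  (forall k, ~ feasible fs (x k)) ->
  (exists B, forall k, enorm (x k) <= B) ->
  forall p, cluster_point x p -> Xstar f (feasible fs) fstar p.
Proof.
move=> fs_convex f_cont [_ fstar_le] run _ [B xB] p x_p.
have [_ [_ [_ [y_int _]]]] := run.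
have [r [r_gt0 ball_y]] := interior_pt_uniform y_int.
have [C [C_ge0 x_y_le]] := enorm_sub_ub y xB.
have p_feas : feasible fs p.
  move=> j; apply: (convex_sublevel_closed (fs_convex j) (y_int j)).
  apply: (cluster_point_adherent (S := sublevel (fs j)) x_p).
  exact: (sublevel_near_x run r_gt0 C_ge0 ball_y x_y_le j).
split=> //; apply/eqP; rewrite eq_le fstar_le // andbT.
apply: (cluster_point_cont_le x_p f_cont).
exact: (f_x_le_fstar run).
Qed.
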